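(* If $(A,S)$ is an arbitrary QP and $(C,T)$ is a trivial QP (on the same vertex set), then the canonical embedding $R\langle\langle A\rangle\rangle\to R\langle\langle A\oplus C\rangle\rangle$ induces an isomorphism of Jacobian algebras $\mathcal P(A,S)\to\mathcal P(A\oplus C,S+T)$.
   Context: Fix a field $K$; quiver with vertex set $Q_0$, $R=K^{Q_0}$, arrow span $A$ (an $R$-bimodule, $A_{i,j}=e_iAe_j$ spanned by arrows from $j$ to $i$). $R\langle\langle A\rangle\rangle=\prod_{d\ge0}A^d$ is the complete path algebra (possibly infinite linear combinations of paths) with the $\mathfrak m$-adic topology, $\mathfrak m=\prod_{d\ge1}A^d$. A potential is a possibly infinite linear combination of cyclic paths; cyclic equivalence: difference lies in the closure of the span of $a_1\cdots a_d-a_2\cdots a_da_1$. For $\xi\in A^\star$, $\partial_\xi(a_1\cdots a_d)=\sum_k\xi(a_k)a_{k+1}\cdots a_da_1\cdots a_{k-1}$. $J(S)$ is the closure of the two-sided ideal generated by all $\partial_\xi S$; $\mathcal P(A,S)=R\langle\langle A\rangle\rangle/J(S)$. A QP $(A,S)$: no loops ($A_{i,i}=0$) and no two cyclically equivalent cyclic paths in $S$. $(A,S)\oplus(C,T)=(A\oplus C,S+T)$, with $R\langle\langle A\rangle\rangle$ and $R\langle\langle C\rangle\rangle$ embedded as closed subalgebras of $R\langle\langle A\oplus C\rangle\rangle$. A QP $(C,T)$ is trivial if $T\in C^2$ and $\{\partial_\xi T:\xi\in C^\star\}=C$. *)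

From HB Require Import structures.
From mathcomp Require Import all_boot all_algebra.
Set Implicit Arguments. Unset Strict Implicit. Unset Printing Implicit Defensive.
Import GRing.Theory.
Local Open Scope ring_scope.

Section CPA.
Variables (K : fieldType) (V Ar : finType) (src tgt : Ar -> V).

(* A path a_1 a_2 ... a_d (a_d traversed first, composition order):
   src a_k = tgt a_(k+1).  Encoded as (target vertex, list of arrows);
   the empty list at vertex i is the trivial path e_i. *)
Definition composable (s : seq Ar) : bool :=
  if s is a :: s' then path (fun x y => src x == tgt y) a s' else true.

Definition validp (p : V * seq Ar) : bool :=
  if p.2 is a :: _ then (tgt a == p.1) && composable p.2 else true.

Definition qpath := {p : V * seq Ar | validp p}.

Definition ptgt (p : qpath) : V := (val p).1.
Definition parrows (p : qpath) : seq Ar := (val p).2.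
Definition psrc (p : qpath) : V :=
  if parrows p is a :: s then src (last a s) else ptgt p.
Definition plen (p : qpath) : nat := size (parrows p).

(* R<<A>> = prod_d A^d : arbitrary (possibly infinite) K-combinations of paths *)
Definition cpa := qpath -> K.

(* coefficient of a raw word (0 if it is not a path) *)
Definition pv (f : cpa) (q : V * seq Ar) : K :=
  if (insub q : option qpath) is Some q' then f q' else 0.

Definition cpa_add (f g : cpa) : cpa := fun p => f p + g p.
Definition cpa_opp (f : cpa) : cpa := fun p => - f p.
Definition cpa_mul (f g : cpa) : cpa := fun p =>
  \sum_(k < (plen p).+1)
     pv f (ptgt p, take k (parrows p)) *
     pv g (if drop k (parrows p) is a :: _ then tgt a else psrc p,
           drop k (parrows p)).

Definition ideal_gen (G : cpa -> Prop) (x : cpa) : Prop :=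
  exists n (u g w : 'I_n -> cpa), (forall j, G (g j)) /\
    forall p, x p = \sum_(j < n) cpa_mul (cpa_mul (u j) (g j)) (w j) p.

(* closure in the m-adic topology (m^n = prod_(d >= n) A^d) *)
Definition mclosure (X : cpa -> Prop) (y : cpa) : Prop :=
  forall n : nat, exists x, X x /\ forall p, (plen p < n)%N -> x p = y p.

Definition cyclicp (p : qpath) : bool := (0 < plen p)%N && (psrc p == ptgt p).
Definition potential (S : cpa) : Prop := forall p, S p != 0 -> cyclicp p.
Definition no_loops : Prop := forall a, src a != tgt a.
Definition cyc_equiv_paths (p q : qpath) : Prop :=
  exists k, parrows q = rot k (parrows p).

Definition QP (S : cpa) : Prop :=
  no_loops /\ potential S /\
  forall p q, cyclicp p -> cyclicp q -> p != q -> cyc_equiv_paths p q ->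
    S p = 0 \/ S q = 0.

Definition pcyc (S : cpa) (w : seq Ar) : K :=
  if w is a :: w' then
    (if src (last a w') == tgt a then pv S (tgt a, w) else 0)
  else 0.

(* cyclic derivative d_xi, xi in A^* given by its values on the arrow basis:
   d_xi (a_1...a_d) = sum_k xi(a_k) a_(k+1)...a_d a_1...a_(k-1).
   Coefficient of p = u v (u = take j, v = drop j) comes from c = v a u. *)
Definition cder (xi : Ar -> K) (S : cpa) : cpa := fun p =>
  \sum_(j < (plen p).+1) \sum_(a : Ar)
     (if src a == ptgt p then
        xi a * pcyc S (drop j (parrows p) ++ a :: take j (parrows p))
      else 0).

Definition jac_ideal (S : cpa) : cpa -> Prop :=
  mclosure (ideal_gen (fun g => exists xi : Ar -> K, forall p, g p = cder xi S p)).

(* (C,T) trivial QP: T in C^2 and {d_xi T | xi in C^*} = C (= degree-1 part) *)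
Definition trivial_QP (T : cpa) : Prop :=
  QP T /\ (forall p, plen p != 2%N -> T p = 0) /\
  (forall f : cpa, (forall p, plen p != 1%N -> f p = 0) <->
                   exists xi : Ar -> K, forall p, f p = cder xi T p).

End CPA.

Definition sum_map (V A C : Type) (fA : A -> V) (fC : C -> V) : A + C -> V :=
  fun x => match x with inl a => fA a | inr c => fC c end.

Section Emb.
Variables (K : fieldType) (V Ar Ca : finType)
  (srcA tgtA : Ar -> V) (srcC tgtC : Ca -> V).

Let sAC := sum_map srcA srcC.
Let tAC := sum_map tgtA tgtC.

Definition getl (x : Ar + Ca) : option Ar := if x is inl a then Some a else None.
Definition getr (x : Ar + Ca) : option Ca := if x is inr c then Some c else None.

Definition embl (f : cpa K srcA tgtA) : cpa K sAC tAC := fun p =>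
  if all (fun x => getl x != None) (parrows p)
  then pv f (ptgt p, pmap getl (parrows p)) else 0.
Definition embr (f : cpa K srcC tgtC) : cpa K sAC tAC := fun p =>
  if all (fun x => getr x != None) (parrows p)
  then pv f (ptgt p, pmap getr (parrows p)) else 0.

Definition sum_pot (S : cpa K srcA tgtA) (T : cpa K srcC tgtC) : cpa K sAC tAC :=
  cpa_add (embl S) (embr T).

End Emb.

From mathcomp Require Import all_boot all_algebra.
From Stdlib Require Import FunctionalExtensionality ClassicalEpsilon.
Set Implicit Arguments. Unset Strict Implicit. Unset Printing Implicit Defensive.
Import GRing.Theory.
Local Open Scope ring_scope.

(** Seen in [A (+) C], the cyclic derivatives of [S + T] in the directions of
   [A] are those of [S], and those in the directions of [C] are those of [T]
   (paths mixing the two kinds of arrows never occur in [S + T], and loops are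
   excluded); since [(C, T)] is trivial, the latter span the arrows of [C].
   Restriction to paths in [A] is a continuous algebra map sending derivatives
   of [S + T] back to derivatives of [S], and it splits the embedding; this
   gives [J(S) = J(S + T) ∩ R<<A>>].  For surjectivity, a series differs from
   the embedding of its restriction by a series supported on paths through
   arrows of [C], which is an m-adic limit of elements of the ideal generated
   by these arrows. *)

Lemma all_drop_cons_take (T : Type) (P : pred T) j y w :
  all P (drop j w ++ y :: take j w) = P y && all P w.
Proof.
rewrite all_cat /= andbCA; congr (_ && _).
by rewrite andbC -all_cat cat_take_drop.
Qed.

Section PathAlgebra.
Variables (K : fieldType) (V Ar : finType) (src tgt : Ar -> V).
Local Notation cpa := (cpa K src tgt).
Local Notation validp := (validp src tgt).

Lemma validp_cons v a t : validp (v, a :: t) = (tgt a == v) && validp (src a, t).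
Proof. by case: t => [|b t] //=; congr (_ && (_ && _)); apply: eq_sym. Qed.

Lemma pv_valid (f : cpa) v w (H : validp (v, w)) : pv f (v, w) = f (exist _ (v, w) H).
Proof.
rewrite /pv; case: insubP => [q _ Eq|]; last by rewrite H.
by congr f; apply: val_inj.
Qed.

Lemma pv_invalid (f : cpa) v w : ~~ validp (v, w) -> pv f (v, w) = 0.
Proof. by move=> H; rewrite /pv; case: insubP => [q Hq _|//]; rewrite Hq in H. Qed.

Lemma pv_sum (x : cpa) n (F : 'I_n -> cpa) :
  (forall p, x p = \sum_(j < n) F j p) -> forall w, pv x w = \sum_(j < n) pv (F j) w.
Proof.
move=> Hx w; rewrite /pv; case: insub => [p|]; first exact: Hx.
by rewrite big1.
Qed.

Lemma pv_add (f g : cpa) w : pv (cpa_add f g) w = pv f w + pv g w.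
Proof. by rewrite /pv; case: insub => [p|] //; rewrite addr0. Qed.

Lemma pcyc_add (f g : cpa) w : pcyc (cpa_add f g) w = pcyc f w + pcyc g w.
Proof. by case: w => [|a w] /=; [rewrite addr0|case: ifP; rewrite ?pv_add ?addr0]. Qed.

Lemma pcyc_arrow (f : cpa) a : src a != tgt a -> pcyc f [:: a] = 0.
Proof. by rewrite /pcyc /= => /negbTE ->. Qed.

Definition word_src (v : V) (w : seq Ar) : V :=
  if w is c :: w' then src (last c w') else v.

(* Target of the right factor [drop k w] of the path [(v, w)]; as arrows compose
   right to left, this is the source of the path when that factor is trivial. *)
Definition suffix_tgt (v : V) (w : seq Ar) (k : nat) : V :=
  if drop k w is b :: _ then tgt b else word_src v w.

Lemma suffix_tgtS v a t k : suffix_tgt v (a :: t) k.+1 = suffix_tgt (src a) t k.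
Proof. by rewrite /suffix_tgt /=; case: t. Qed.

Lemma cpa_mulE (f g : cpa) v w H :
  cpa_mul f g (exist _ (v, w) H) =
  \sum_(k < (size w).+1) pv f (v, take k w) * pv g (suffix_tgt v w k, drop k w).
Proof. by []. Qed.

Lemma pv_mul (f g : cpa) v w : pv (cpa_mul f g) (v, w) =
  if validp (v, w) then
    \sum_(k < (size w).+1) pv f (v, take k w) * pv g (suffix_tgt v w k, drop k w)
  else 0.
Proof. by case: (boolP (validp (v, w))) => H; rewrite ?(pv_valid _ H) ?pv_invalid. Qed.

Definition cpa_arrow (a : Ar) : cpa := fun p => (parrows p == [:: a])%:R.
Definition cpa_one : cpa := fun p => (parrows p == [::])%:R.

Lemma pv_arrow a v w : pv (cpa_arrow a) (v, w) = ((v == tgt a) && (w == [:: a]))%:R.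
Proof.
case: (boolP (validp (v, w))) => H.
  rewrite (pv_valid _ H) /cpa_arrow /parrows /=.
  case: eqP => [Ew|]; last by rewrite andbF.
  by move: H; rewrite Ew validp_cons => /andP[/eqP -> _]; rewrite eqxx.
rewrite pv_invalid //; case: eqP => // Ev; case: eqP => // Ew.
by move: H; rewrite Ev Ew validp_cons eqxx.
Qed.

Lemma pv_one v w : pv cpa_one (v, w) = (w == [::])%:R.
Proof.
case: (boolP (validp (v, w))) => H; first by rewrite (pv_valid _ H).
by rewrite pv_invalid //; case: w H.
Qed.

Lemma mul_arrowE a (f : cpa) p : cpa_mul (cpa_arrow a) f p =
  if parrows p is a' :: t then (a' == a)%:R * pv f (src a', t) else 0.
Proof.
case: p => [[v w] H]; rewrite cpa_mulE /parrows /=.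
case: w H => [|a' t] H.
  by rewrite big_ord_recl big_ord0 pv_arrow /= andbF mul0r addr0.
rewrite big_ord_recl pv_arrow /= andbF mul0r add0r.
rewrite big_ord_recl big1 ?addr0; last first.
  move=> i _; rewrite pv_arrow /=.
  case: t H i => [|b t] H i; first by case: i.
  by rewrite /= !eqseq_cons andbF /= andbF mul0r.
rewrite pv_arrow /= take0 drop0 eqseq_cons andbT.
case: (a' =P a) => [<-|]; last by rewrite andbF !mul0r.
move: H; rewrite validp_cons eq_sym => /andP[-> Ht] /=.
rewrite /suffix_tgt /=; case: t Ht => [|b t] //.
by rewrite addn0 drop0 validp_cons => /andP[/eqP ->].
Qed.

Lemma pv_mul_arrow a (f : cpa) v w : pv (cpa_mul (cpa_arrow a) f) (v, w) =
  if w is a' :: t then ((v == tgt a') && (a' == a))%:R * pv f (src a', t) else 0.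
Proof.
case: (boolP (validp (v, w))) => H.
  rewrite (pv_valid _ H) mul_arrowE /parrows /=.
  by case: w H => [|a' t] // H; move: H; rewrite validp_cons eq_sym => /andP[-> _].
rewrite pv_invalid //; case: w H => [|a' t] // H.
case: eqP => [Ev|]; last by rewrite mul0r.
by rewrite pv_invalid ?mulr0 //; move: H; rewrite validp_cons Ev eqxx.
Qed.

Lemma mul1cpa (f : cpa) : cpa_mul cpa_one f = f.
Proof.
apply: functional_extensionality => -[[v w] H]; rewrite cpa_mulE.
rewrite big_ord_recl big1 ?addr0; last first.
  by move=> i _; rewrite pv_one; case: w H i => [|b t] H i; [case: i|rewrite mul0r].
rewrite pv_one take0 eqxx mul1r drop0 /suffix_tgt drop0.
case: w H => [|b t] H; first by rewrite (pv_valid _ H).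
have /andP[/eqP Ev _] : (tgt b == v) && validp (src b, t) by rewrite -validp_cons.
by rewrite Ev (pv_valid _ H).
Qed.

Lemma mul_arrowA a (f h : cpa) :
  cpa_mul (cpa_arrow a) (cpa_mul f h) = cpa_mul (cpa_mul (cpa_arrow a) f) h.
Proof.
apply: functional_extensionality => -[[v w] H].
rewrite mul_arrowE cpa_mulE /parrows /=.
case: w H => [|a' t] H.
  by rewrite big_ord_recl big_ord0 pv_mul_arrow mul0r addr0.
rewrite big_ord_recl pv_mul_arrow mul0r add0r.
move: H; rewrite validp_cons => /andP[/eqP Ev H].
rewrite pv_mul H big_distrr; apply: eq_bigr => i _ /=.
by rewrite pv_mul_arrow -Ev eqxx suffix_tgtS mulrA.
Qed.

Lemma mul_arrow_sum a (x : cpa) n (F : 'I_n -> cpa) :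
  (forall p, x p = \sum_(j < n) F j p) ->
  forall p, cpa_mul (cpa_arrow a) x p = \sum_(j < n) cpa_mul (cpa_arrow a) (F j) p.
Proof.
move=> Hx p; rewrite mul_arrowE; under eq_bigr do rewrite mul_arrowE.
case: (parrows p) => [|a' t]; first by rewrite big1.
by rewrite (pv_sum Hx) big_distrr.
Qed.

Lemma sum_mul_arrowE (W : Ar -> cpa) p :
  \sum_(a : Ar) cpa_mul (cpa_arrow a) (W a) p =
  if parrows p is a :: t then pv (W a) (src a, t) else 0.
Proof.
under eq_bigr do rewrite mul_arrowE.
case: (parrows p) => [|a t]; first by rewrite big1.
rewrite (bigD1 a) //= eqxx mul1r big1 ?addr0 // => b /negbTE.
by rewrite eq_sym => ->; rewrite mul0r.
Qed.

Definition jac_gen (S : cpa) : cpa -> Prop :=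
  fun g => exists xi : Ar -> K, forall p, g p = cder xi S p.

End PathAlgebra.

Arguments cpa_arrow {K V Ar src tgt} a.
Arguments cpa_one {K V Ar src tgt}.

Section IdealGen.
Variables (K : fieldType) (V Ar : finType) (src tgt : Ar -> V).
Local Notation cpa := (cpa K src tgt).
Variable G : cpa -> Prop.

Lemma ideal_gen0 : ideal_gen G (fun _ => 0).
Proof.
exists 0%N, (fun _ => cpa_one), (fun _ => cpa_one), (fun _ => cpa_one).
by split=> [[]//|p]; rewrite big_ord0.
Qed.

Lemma ideal_gen_mulr (g w : cpa) : G g -> ideal_gen G (cpa_mul g w).
Proof.
move=> Gg; exists 1%N, (fun _ => cpa_one), (fun _ => g), (fun _ => w).
by split=> // p; rewrite big_ord1 mul1cpa.
Qed.

Lemma ideal_genD (f g : cpa) :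
  ideal_gen G f -> ideal_gen G g -> ideal_gen G (cpa_add f g).
Proof.
move=> [n1 [u1 [g1 [w1 [G1 E1]]]]] [n2 [u2 [g2 [w2 [G2 E2]]]]].
pose sel (T : Type) (a : 'I_n1 -> T) (b : 'I_n2 -> T) (j : 'I_(n1 + n2)) :=
  match split j with inl j1 => a j1 | inr j2 => b j2 end.
exists (n1 + n2)%N, (sel _ u1 u2), (sel _ g1 g2), (sel _ w1 w2); split.
  by move=> j; rewrite /sel; case: split.
move=> p; rewrite /cpa_add E1 E2 big_split_ord /sel.
congr (_ + _); apply: eq_bigr => j _.
  by have := unsplitK (inl j : 'I_n1 + 'I_n2) => /= ->.
by have := unsplitK (inr j : 'I_n1 + 'I_n2) => /= ->.
Qed.

Lemma ideal_gen_ext (f g : cpa) :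
  (forall p, f p = g p) -> ideal_gen G f -> ideal_gen G g.
Proof. by move=> E [n [u [h [w [Gh Ef]]]]]; exists n, u, h, w; split=> // p; rewrite -E. Qed.

Lemma ideal_gen_sum (I : Type) (r : seq I) (F : I -> cpa) :
  (forall i, ideal_gen G (F i)) -> ideal_gen G (fun p => \sum_(i <- r) F i p).
Proof.
move=> GF; elim: r => [|i r IH].
  by apply: ideal_gen_ext ideal_gen0 => p; rewrite big_nil.
by apply: ideal_gen_ext (ideal_genD (GF i) IH) => p; rewrite big_cons.
Qed.

Lemma ideal_gen_mul_arrow a (x : cpa) :
  ideal_gen G x -> ideal_gen G (cpa_mul (cpa_arrow a) x).
Proof.
move=> [n [u [g [w [Gg E]]]]].
exists n, (fun j => cpa_mul (cpa_arrow a) (u j)), g, w; split=> // p.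
rewrite (mul_arrow_sum a E); apply: eq_bigr => j _.
by rewrite !mul_arrowA.
Qed.

(* A series supported on paths through [bad] arrows is an m-adic limit of
   left multiples of those arrows; the approximants are built by induction on
   the length, peeling off the first arrow of each path. *)
Lemma mclosure_ideal_gen_arrows (bad : pred Ar) (z : cpa) :
  (forall a, bad a -> G (cpa_arrow a)) ->
  (forall p, ~~ has bad (parrows p) -> z p = 0) -> mclosure (ideal_gen G) z.
Proof.
move=> G_bad z_bad n; elim: n z z_bad => [|n IH] z z_bad.
  by exists (fun _ => 0); split=> //; exact: ideal_gen0.
pose lquot a : cpa := fun q => pv z (tgt a, a :: parrows q).
have W_ex a : exists W : cpa, ideal_gen G (cpa_mul (cpa_arrow a) W) /\
    forall q, (plen q < n)%N -> W q = lquot a q.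
  have [bad_a|good_a] := boolP (bad a).
    by exists (lquot a); split=> //; apply: ideal_gen_mulr; apply: G_bad.
  have [|x [Gx Ex]] := IH (lquot a).
    move=> [[v w] H] /= w_good; rewrite /lquot /=.
    case: (boolP (validp src tgt (tgt a, a :: w))) => H'; last by rewrite pv_invalid.
    by rewrite (pv_valid _ H') z_bad //= negb_or good_a.
  by exists x; split=> //; apply: ideal_gen_mul_arrow.
have [W W_ideal W_lquot] : exists2 W : Ar -> cpa,
    forall a, ideal_gen G (cpa_mul (cpa_arrow a) (W a)) &
    forall a q, (plen q < n)%N -> W a q = lquot a q.
  exists (fun a => proj1_sig (constructive_indefinite_description _ (W_ex a))) => a;
    by have [] := proj2_sig (constructive_indefinite_description _ (W_ex a)).
exists (fun p => \sum_(a : Ar) cpa_mul (cpa_arrow a) (W a) p); split.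
  exact: ideal_gen_sum.
move=> [[v w] H] lt_wn; rewrite sum_mul_arrowE /=.
case: w H lt_wn => [|a t] H lt_wn; first by rewrite z_bad.
have /andP[/eqP Ev Ht] : (tgt a == v) && validp src tgt (src a, t) by rewrite -validp_cons.
subst v; rewrite /= (pv_valid _ Ht) W_lquot //.
by rewrite /lquot /= (pv_valid _ H).
Qed.

End IdealGen.

Section Transfer.
Variables (K : fieldType) (V X Y : finType) (sX tX : X -> V) (sY tY : Y -> V).
Local Notation cX := (cpa K sX tX).
Local Notation cY := (cpa K sY tY).
Variable F : cX -> cY.

Lemma ideal_gen_transfer (GX : cX -> Prop) (GY : cY -> Prop) :
  (forall f g, F (cpa_mul f g) = cpa_mul (F f) (F g)) ->
  (forall x n (H : 'I_n -> cX), (forall q, x q = \sum_(j < n) H j q) ->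
     forall p, F x p = \sum_(j < n) F (H j) p) ->
  (forall g, GX g -> GY (F g)) ->
  forall x, ideal_gen GX x -> ideal_gen GY (F x).
Proof.
move=> FM F_sum FG x [n [u [g [w [Gg E]]]]].
exists n, (F \o u), (F \o g), (F \o w); split=> [j|p]; first exact: FG.
by rewrite (F_sum _ _ _ E); apply: eq_bigr => j _; rewrite !FM.
Qed.

Lemma mclosure_transfer (XX : cX -> Prop) (YY : cY -> Prop) :
  (forall n f g, (forall q, (plen q < n)%N -> f q = g q) ->
     forall p, (plen p < n)%N -> F f p = F g p) ->
  (forall x, XX x -> YY (F x)) ->
  forall x, mclosure XX x -> mclosure YY (F x).
Proof.
move=> F_cont FXY x clx n; have [x' [XXx' Ex']] := clx n.
by exists (F x'); split; [exact: FXY | exact: F_cont].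
Qed.

End Transfer.

Section Embedding.
Variables (K : fieldType) (V X Y : finType) (sX tX : X -> V) (sY tY : Y -> V).
Variables (phi : X -> Y) (psi : Y -> option X).
Hypotheses (phi_src : forall x, sY (phi x) = sX x) (phi_tgt : forall x, tY (phi x) = tX x).
Hypotheses (phiK : pcancel phi psi) (psiK : ocancel psi phi).
Local Notation cX := (cpa K sX tX).
Local Notation cY := (cpa K sY tY).
Local Notation in_image := (fun y => psi y != None).

Lemma validp_map v t : validp sY tY (v, map phi t) = validp sX tX (v, t).
Proof.
case: t => [|a t] //; rewrite !validp_cons phi_tgt; congr (_ && _).
by elim: t a => [|b t IH] a //; rewrite /= !validp_cons phi_tgt phi_src IH.
Qed.

Lemma qpath_map_proof (q : qpath sX tX) : validp sY tY (ptgt q, map phi (parrows q)).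
Proof. by rewrite validp_map; case: q => -[]. Qed.

Definition qpath_map (q : qpath sX tX) : qpath sY tY :=
  exist (fun p => validp sY tY p) _ (qpath_map_proof q).

Lemma parrows_map q : parrows (qpath_map q) = map phi (parrows q).
Proof. by []. Qed.

Definition cpa_restr (f : cY) : cX := fun q => f (qpath_map q).

Definition cpa_emb (f : cX) : cY := fun p =>
  if all in_image (parrows p) then pv f (ptgt p, pmap psi (parrows p)) else 0.

Lemma map_pmap w : all in_image w -> map phi (pmap psi w) = w.
Proof.
move=> w_in; rewrite pmap_filter //; apply/all_filterP.
by apply: sub_all w_in => y; case: (psi y).
Qed.

Lemma all_in_image_map t : all in_image (map phi t).
Proof. by elim: t => //= a t ->; rewrite phiK. Qed.

Lemma pv_map (f : cY) v t : pv f (v, map phi t) = pv (cpa_restr f) (v, t).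
Proof.
case: (boolP (validp sX tX (v, t))) => H; last by rewrite !pv_invalid ?validp_map.
have H' : validp sY tY (v, map phi t) by rewrite validp_map.
by rewrite (pv_valid _ H') (pv_valid _ H) /cpa_restr; congr f; exact: val_inj.
Qed.

Lemma cpa_emb_map (f : cX) q : cpa_emb f (qpath_map q) = f q.
Proof.
rewrite /cpa_emb /= all_in_image_map (map_pK phiK).
by case: q => -[v w] H; rewrite (pv_valid _ H).
Qed.

Lemma cpa_embK : cancel cpa_emb cpa_restr.
Proof. by move=> f; apply: functional_extensionality => q; exact: cpa_emb_map. Qed.

Lemma qpath_map_onto (p : qpath sY tY) : all in_image (parrows p) ->
  exists q, p = qpath_map q.
Proof.
move=> p_in.
have Hq : validp sX tX (ptgt p, pmap psi (parrows p)).
  by rewrite -validp_map map_pmap //; case: p p_in => -[].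
exists (exist (fun q => validp sX tX q) _ Hq); apply: val_inj.
by rewrite /= map_pmap // /ptgt /parrows /=; case: (val p).
Qed.

Lemma pv_emb (f : cX) v w :
  pv (cpa_emb f) (v, w) = if all in_image w then pv f (v, pmap psi w) else 0.
Proof.
case: (boolP (validp sY tY (v, w))) => H; first by rewrite (pv_valid _ H).
rewrite pv_invalid //; case: ifP => // w_in.
by rewrite pv_invalid // -validp_map map_pmap.
Qed.

Lemma suffix_tgt_map v w k : suffix_tgt sY tY v (map phi w) k = suffix_tgt sX tX v w k.
Proof.
rewrite /suffix_tgt -map_drop; case: (drop k w) => [|b s] /=; last by rewrite phi_tgt.
by case: w => [|a w] //=; rewrite last_map phi_src.
Qed.

Lemma cpa_restrM (f g : cY) : cpa_restr (cpa_mul f g) = cpa_mul (cpa_restr f) (cpa_restr g).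
Proof.
apply: functional_extensionality => -[[v w] H].
rewrite /cpa_restr /qpath_map /= !cpa_mulE /= size_map; apply: eq_bigr => k _.
by rewrite -map_take -map_drop !pv_map suffix_tgt_map.
Qed.

(* On paths through [phi]-arrows only the product is computed in [X]; on any
   other path every factorisation has a factor outside the image. *)
Lemma cpa_embM (f g : cX) : cpa_emb (cpa_mul f g) = cpa_mul (cpa_emb f) (cpa_emb g).
Proof.
apply: functional_extensionality => p.
have [p_in|p_out] := boolP (all in_image (parrows p)).
  have [q ->] := qpath_map_onto p_in.
  rewrite cpa_emb_map -[RHS]/(cpa_restr _ q) cpa_restrM.
  by rewrite !cpa_embK.
rewrite /cpa_emb (negbTE p_out).
case: p p_out => -[v w] H p_out; rewrite cpa_mulE big1 // => k _.
rewrite !pv_emb; move: p_out; rewrite /parrows /= -{1}(cat_take_drop k w) all_cat.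
by case: (all _ (take k w)); case: (all _ (drop k w)); rewrite ?mul0r ?mulr0.
Qed.

Lemma pcyc_map (f : cY) w : pcyc f (map phi w) = pcyc (cpa_restr f) w.
Proof.
case: w => [|a w] //; rewrite /pcyc /= last_map phi_src phi_tgt.
by case: ifP => // _; rewrite -pv_map.
Qed.

Lemma pcyc_emb (f : cX) w :
  pcyc (cpa_emb f) w = if all in_image w then pcyc f (pmap psi w) else 0.
Proof.
case: ifP => w_in; first by rewrite -{1}(map_pmap w_in) pcyc_map cpa_embK.
case: w w_in => [|a w] // w_out; rewrite /pcyc; case: ifP => // _.
by rewrite pv_emb w_out.
Qed.

Lemma cpa_emb_sum (x : cX) n (F : 'I_n -> cX) :
  (forall q, x q = \sum_(j < n) F j q) ->
  forall p, cpa_emb x p = \sum_(j < n) cpa_emb (F j) p.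
Proof.
move=> E p; rewrite /cpa_emb; case: ifP => _; first exact: pv_sum.
by rewrite big1.
Qed.

Lemma cpa_emb_cont n (f g : cX) : (forall q, (plen q < n)%N -> f q = g q) ->
  forall p, (plen p < n)%N -> cpa_emb f p = cpa_emb g p.
Proof.
move=> E p lt_pn; have [p_in|p_out] := boolP (all in_image (parrows p)).
  have [q Epq] := qpath_map_onto p_in; subst p.
  by rewrite !cpa_emb_map E //; rewrite /plen /= size_map in lt_pn.
by rewrite /cpa_emb (negbTE p_out).
Qed.

End Embedding.

Lemma sum_map_inl (V A C : Type) (fA : A -> V) (fC : C -> V) a : sum_map fA fC (inl a) = fA a.
Proof. by []. Qed.

Lemma sum_map_inr (V A C : Type) (fA : A -> V) (fC : C -> V) c : sum_map fA fC (inr c) = fC c.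
Proof. by []. Qed.

Lemma inlK (A C : finType) : pcancel inl (@getl A C).
Proof. by []. Qed.

Lemma inrK (A C : finType) : pcancel inr (@getr A C).
Proof. by []. Qed.

Lemma getlK (A C : finType) : ocancel (@getl A C) inl.
Proof. by case. Qed.

Lemma getrK (A C : finType) : ocancel (@getr A C) inr.
Proof. by case. Qed.

Section SumPotential.
Variables (K : fieldType) (V Ar Ca : finType).
Variables (srcA tgtA : Ar -> V) (srcC tgtC : Ca -> V).
Variables (S : cpa K srcA tgtA) (T : cpa K srcC tgtC).
Hypotheses (nlA : no_loops srcA tgtA) (nlC : no_loops srcC tgtC).
Local Notation sAC := (sum_map srcA srcC).
Local Notation tAC := (sum_map tgtA tgtC).
Local Notation cAC := (cpa K sAC tAC).
Local Notation ST := (sum_pot S T).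
Local Notation isl := (fun y : Ar + Ca => (@getl Ar Ca) y != None).
Local Notation isr := (fun y : Ar + Ca => (@getr Ar Ca) y != None).
Local Notation embl := (@embl K V Ar Ca srcA tgtA srcC tgtC).
Local Notation inl_src := (sum_map_inl srcA srcC).
Local Notation inl_tgt := (sum_map_inl tgtA tgtC).
Local Notation inr_src := (sum_map_inr srcA srcC).
Local Notation inr_tgt := (sum_map_inr tgtA tgtC).

Definition restrl : cAC -> cpa K srcA tgtA := cpa_restr inl_src inl_tgt.

Lemma emblE (f : cpa K srcA tgtA) : embl f = cpa_emb (sY := sAC) (tY := tAC) (@getl Ar Ca) f.
Proof. by []. Qed.

Lemma pcyc_sum_pot w : pcyc ST w =
  (if all isl w then pcyc S (pmap (@getl Ar Ca) w) else 0) +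
  (if all isr w then pcyc T (pmap (@getr Ar Ca) w) else 0).
Proof.
rewrite pcyc_add emblE (pcyc_emb inl_src inl_tgt (@inlK _ _) (@getlK _ _)).
by rewrite (pcyc_emb inr_src inr_tgt (@inrK _ _) (@getrK _ _)).
Qed.

Lemma pcyc_sum_pot_inl w : pcyc ST (map inl w) = pcyc S w.
Proof.
case: w => [|a w] //; rewrite pcyc_sum_pot /= addr0.
by rewrite (all_in_image_map (@inlK _ _)) (map_pK (@inlK _ _)).
Qed.

Lemma pcyc_sum_pot_inr w : pcyc ST (map inr w) = pcyc T w.
Proof.
case: w => [|c w] //; rewrite pcyc_sum_pot /= add0r.
by rewrite (all_in_image_map (@inrK _ _)) (map_pK (@inrK _ _)).
Qed.

Lemma pcyc_sum_pot_mixed w : ~~ all isl w -> ~~ all isr w -> pcyc ST w = 0.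
Proof. by move=> /negbTE wl /negbTE wr; rewrite pcyc_sum_pot wl wr addr0. Qed.

Lemma pcyc_sum_pot_inl_inr u c t : pcyc ST (map inl u ++ inr c :: map inl t) = 0.
Proof.
case: u t => [|a u] [|b t]; try by apply: pcyc_sum_pot_mixed; rewrite all_cat /= ?andbF.
by rewrite pcyc_sum_pot /= add0r; apply: pcyc_arrow; apply: nlC.
Qed.

Lemma pcyc_sum_pot_inr_inl u a t : pcyc ST (map inr u ++ inl a :: map inr t) = 0.
Proof.
case: u t => [|c u] [|d t]; try by apply: pcyc_sum_pot_mixed; rewrite all_cat /= ?andbF.
by rewrite pcyc_sum_pot /= addr0; apply: pcyc_arrow; apply: nlA.
Qed.

Lemma cder_sum_pot_inl xi q : cder xi ST (qpath_map inl_src inl_tgt q) = cder (fun a => xi (inl a)) S q.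
Proof.
case: q => -[v w] H; rewrite /cder /plen /parrows /ptgt /= size_map.
apply: eq_bigr => j _; rewrite big_sumType /= [X in _ + X]big1 ?addr0 => [|c _].
  apply: eq_bigr => a _; case: ifP => // _.
  by rewrite -map_take -map_drop -map_cons -map_cat pcyc_sum_pot_inl.
by case: ifP => // _; rewrite -map_take -map_drop pcyc_sum_pot_inl_inr mulr0.
Qed.

Lemma cder_sum_pot_inr xi q : cder xi ST (qpath_map inr_src inr_tgt q) = cder (fun c => xi (inr c)) T q.
Proof.
case: q => -[v w] H; rewrite /cder /plen /parrows /ptgt /= size_map.
apply: eq_bigr => j _; rewrite big_sumType /= [X in X + _]big1 ?add0r => [|a _].
  apply: eq_bigr => c _; case: ifP => // _.
  by rewrite -map_take -map_drop -map_cons -map_cat pcyc_sum_pot_inr.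
by case: ifP => // _; rewrite -map_take -map_drop pcyc_sum_pot_inr_inl mulr0.
Qed.

Lemma cder_sum_pot_outl xi p : (forall c, xi (inr c) = 0) -> ~~ all isl (parrows p) ->
  cder xi ST p = 0.
Proof.
move=> xi_r p_out; rewrite /cder big1 // => j _.
rewrite big_sumType /= [X in _ + X]big1 ?addr0 => [|c _]; last first.
  by case: ifP => // _; rewrite xi_r mul0r.
apply: big1 => a _; case: ifP => // _.
by rewrite pcyc_sum_pot_mixed ?mulr0 // all_drop_cons_take.
Qed.

Lemma cder_sum_pot_outr xi p : (forall a, xi (inl a) = 0) -> ~~ all isr (parrows p) ->
  cder xi ST p = 0.
Proof.
move=> xi_l p_out; rewrite /cder big1 // => j _.
rewrite big_sumType /= [X in X + _]big1 ?add0r => [|a _]; last first.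
  by case: ifP => // _; rewrite xi_l mul0r.
apply: big1 => c _; case: ifP => // _.
by rewrite pcyc_sum_pot_mixed ?mulr0 // all_drop_cons_take.
Qed.

Lemma embl_map f q : embl f (qpath_map inl_src inl_tgt q) = f q.
Proof. exact: (cpa_emb_map inl_src inl_tgt (@inlK _ _)). Qed.

Lemma jac_gen_embl g : jac_gen S g -> jac_gen ST (embl g).
Proof.
move=> [xi Exi]; exists (sum_map xi (fun _ => 0)) => p.
have [p_in|p_out] := boolP (all isl (parrows p)); last first.
  by rewrite cder_sum_pot_outl // emblE /cpa_emb (negbTE p_out).
have [q ->] := qpath_map_onto inl_src inl_tgt (@getlK _ _) p_in.
by rewrite embl_map cder_sum_pot_inl.
Qed.

Lemma jac_gen_restrl g : jac_gen ST g -> jac_gen S (restrl g).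
Proof.
move=> [xi Exi]; exists (fun a => xi (inl a)) => q.
by rewrite /restrl /cpa_restr Exi cder_sum_pot_inl.
Qed.

Lemma jac_ideal_embl x : jac_ideal S x <-> jac_ideal ST (embl x).
Proof.
split=> Jx.
  apply: mclosure_transfer Jx => [n f g|y].
    exact: (cpa_emb_cont inl_src inl_tgt (@inlK _ _) (@getlK _ _)).
  apply: ideal_gen_transfer; last exact: jac_gen_embl.
    exact: (cpa_embM inl_src inl_tgt (@inlK _ _) (@getlK _ _)).
  exact: cpa_emb_sum.
rewrite -(cpa_embK inl_src inl_tgt (@inlK _ _) x).
apply: mclosure_transfer Jx => [n f g E q lt_qn|y].
  by apply: E; rewrite /plen /= size_map.
apply: ideal_gen_transfer; last exact: jac_gen_restrl.
  exact: cpa_restrM.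
by move=> z n F E q; rewrite /restrl /cpa_restr E.
Qed.

Hypothesis T_arrows : forall f : cpa K srcC tgtC,
  (forall p, plen p != 1%N -> f p = 0) <-> jac_gen T f.

Lemma jac_gen_arrow_inr c : jac_gen ST (cpa_arrow (inr c)).
Proof.
have [xi Exi] : jac_gen T (cpa_arrow c).
  by apply/T_arrows => p; rewrite /cpa_arrow /plen; case: (parrows p =P [:: c]) => // ->.
exists (sum_map (fun _ => 0) xi) => p.
have [p_in|p_out] := boolP (all isr (parrows p)); last first.
  rewrite cder_sum_pot_outr // /cpa_arrow; case: eqP => // E.
  by rewrite E in p_out.
have [q ->] := qpath_map_onto inr_src inr_tgt (@getrK _ _) p_in.
rewrite cder_sum_pot_inr // -Exi /cpa_arrow /=.
by rewrite parrows_map -[[:: inr c]]/(map inr [:: c]) (inj_eq (inj_map (pcan_inj (@inrK _ _)))).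
Qed.

Lemma jac_ideal_sub_embl_restrl y : jac_ideal ST (cpa_add y (cpa_opp (embl (restrl y)))).
Proof.
apply: (mclosure_ideal_gen_arrows (bad := fun y => (@getl Ar Ca) y == None)).
  by case=> // c _; exact: jac_gen_arrow_inr.
move=> p p_in; have [|q ->] := qpath_map_onto inl_src inl_tgt (@getlK _ _) (p := p).
  by rewrite -all_predC in p_in; apply: sub_all p_in => -[].
by rewrite /cpa_add /cpa_opp embl_map subrr.
Qed.

End SumPotential.

Theorem proposition4p5 (K : fieldType) (V Ar Ca : finType)
  (srcA tgtA : Ar -> V) (srcC tgtC : Ca -> V)
  (S : cpa K srcA tgtA) (T : cpa K srcC tgtC) :
  QP S -> trivial_QP T ->
  (* the embedding maps J(S) into J(S+T) (well-defined) and is injective mod J *)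
  (forall x : cpa K srcA tgtA,
      jac_ideal S x <-> jac_ideal (sum_pot S T) (@embl K V Ar Ca srcA tgtA srcC tgtC x)) /\
  (* the induced map P(A,S) -> P(A+C,S+T) is surjective *)
  (forall y : cpa K (sum_map srcA srcC) (sum_map tgtA tgtC),
      exists x : cpa K srcA tgtA,
        jac_ideal (sum_pot S T) (cpa_add y (cpa_opp (@embl K V Ar Ca srcA tgtA srcC tgtC x)))).
Proof.
move=> [nlA _] [[nlC _] [_ T_arrows]]; split=> [x|y].
  exact: jac_ideal_embl.
by exists (restrl y); exact: jac_ideal_sub_embl_restrl.
Qed.
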